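(* Suppose $p_0$ has support $\{0,\dots,S\}$ with $S\in\mathbb N\setminus\{0\}$. Then with probability one there exists $n_0$ such that for all $n\ge n_0$ the support of $\hat p_n$ is either $\{0,\dots,S\}$ or $\{0,\dots,S+1\}$.
   Context: Let $\mathbb N=\{0,1,2,\dots\}$. For a real sequence $p$ and $k\ge1$ let $\Delta p(k)=p(k+1)-2p(k)+p(k-1)$; $p$ is convex if $\Delta p(k)\ge0$ for all $k\ge1$; $\mathcal C$ is the set of convex sequences with $\sum_kp(k)^2<\infty$. Let $p_0$ be a convex probability mass function on $\mathbb N$ (so $p_0(k)>0$ for $k\le S$ and $p_0(k)=0$ for $k\ge S+1$). Let $X_1,X_2,\dots$ be i.i.d. with pmf $p_0$, $p_n(j)=\frac1n\sum_{i=1}^n\mathbb 1\{X_i=j\}$, and let the least squares estimator $\hat p_n$ be the unique minimizer over $\mathcal C$ of $\frac12\sum_{j\in\mathbb N}(p_n(j)-p(j))^2$. The support of a sequence $p$ is $\{k: p(k)\neq 0\}$. *)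

From Stdlib Require Import Reals Lra Lia.
Open Scope R_scope.

Definition Delta (p : nat -> R) (k : nat) : R := p (S k) - 2 * p k + p (pred k).

Definition convex_seq (p : nat -> R) : Prop :=
  forall k : nat, (1 <= k)%nat -> 0 <= Delta p k.

Definition square_summable (p : nat -> R) : Prop :=
  exists l : R, infinite_sum (fun k => p k ^ 2) l.

Definition in_C (p : nat -> R) : Prop := convex_seq p /\ square_summable p.

Definition support (p : nat -> R) (k : nat) : Prop := p k <> 0.

Definition is_pmf (p : nat -> R) : Prop :=
  (forall k, 0 <= p k) /\ infinite_sum p 1.

Definition ls_terms (pn p : nat -> R) (j : nat) : R := / 2 * (pn j - p j) ^ 2.

Definition is_LSE (pn p : nat -> R) : Prop :=
  in_C p /\
  (exists a, infinite_sum (ls_terms pn p) a) /\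
  forall q : nat -> R, in_C q ->
    forall a b, infinite_sum (ls_terms pn p) a ->
                infinite_sum (ls_terms pn q) b -> a <= b.

Definition sigma_algebra {Omega : Type} (F : (Omega -> Prop) -> Prop) : Prop :=
  F (fun _ => True) /\
  (forall A, F A -> F (fun w => ~ A w)) /\
  (forall A : nat -> Omega -> Prop, (forall n, F (A n)) ->
       F (fun w => exists n, A n w)).

Definition is_prob_space {Omega : Type} (F : (Omega -> Prop) -> Prop)
  (P : (Omega -> Prop) -> R) : Prop :=
  sigma_algebra F /\
  (forall A, F A -> 0 <= P A) /\
  P (fun _ => True) = 1 /\
  (forall A : nat -> Omega -> Prop,
      (forall n, F (A n)) ->
      (forall n m w, n <> m -> A n w -> A m w -> False) ->
      infinite_sum (fun n => P (A n)) (P (fun w => exists n, A n w))).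

Fixpoint prodR (f : nat -> R) (n : nat) : R :=
  match n with
  | O => 1
  | S m => prodR f m * f m
  end.

(* X_1, X_2, ... (indexed here from 0) are i.i.d. N-valued random variables
   with pmf p0: each event {X_i = j} is measurable and, for every n, the joint
   law of (X_0, ..., X_{n-1}) is the product law p0^{⊗n}. *)
Definition iid_with_pmf {Omega : Type} (F : (Omega -> Prop) -> Prop)
  (P : (Omega -> Prop) -> R) (X : nat -> Omega -> nat) (p0 : nat -> R) : Prop :=
  (forall i j, F (fun w => X i w = j)) /\
  (forall (n : nat) (j : nat -> nat),
      P (fun w => forall i, (i < n)%nat -> X i w = j i) =
      prodR (fun i => p0 (j i)) n).

Fixpoint count_obs {Omega : Type} (X : nat -> Omega -> nat) (w : Omega)
  (n j : nat) : nat :=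
  match n with
  | O => O
  | S m => (count_obs X w m j + (if Nat.eqb (X m w) j then 1 else 0))%nat
  end.

Definition empirical {Omega : Type} (X : nat -> Omega -> nat) (w : Omega)
  (n : nat) (j : nat) : R :=
  INR (count_obs X w n j) / INR n.

(* Deterministic part: let q vanish beyond S and be close to p0 on {0..S}, and let p be the
   least squares projection of q onto the convex sequences vanishing beyond S+1 (a
   finite-dimensional problem). Since p0 is a competitor, p is close to q, so p(S) is large and
   p(S+1) small: p has a strict kink at S+1. Testing the first-order conditions against the
   tents (j - i)_+, together with Abel summation, shows that the residual q - p has nonpositive
   inner product with every convex sequence that is nonnegative at S+1; hence p is the unique
   least squares estimator over all of C. Being convex and square-summable, p is nonincreasing,
   so its support is {0..S} or {0..S+1}.
   Probabilistic part: almost surely every observation lies in {0..S}, and a fourth-moment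
   Chebyshev bound P(|count_j - n p0(j)| >= n eta) <= 3 / (eta^4 n^2) with Borel-Cantelli shows
   that almost surely the empirical pmf is eventually within eta of p0. *)

From Stdlib Require Import Reals Lra Lia.
From Stdlib Require Import Classical ClassicalEpsilon IndefiniteDescription.
From Stdlib Require Import FunctionalExtensionality PropExtensionality.
(* after [Reals], so that [Defs.Delta] shadows the [Delta] of the standard library *)
From Pilot Require Import Defs.
Open Scope R_scope.

Lemma sum_f_R0_tail_zero (f : nat -> R) (M N : nat) :
  (forall i, (M < i)%nat -> f i = 0) -> (M <= N)%nat -> sum_f_R0 f N = sum_f_R0 f M.
Proof.
  intros Hf HMN. induction HMN as [|N HMN IH]; [reflexivity|].
  rewrite tech5, IH, (Hf (S N)) by lia. ring.
Qed.

Lemma infinite_sum_finite (f : nat -> R) (M : nat) :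
  (forall i, (M < i)%nat -> f i = 0) -> infinite_sum f (sum_f_R0 f M).
Proof.
  intros Hf eps Heps. exists M. intros n Hn.
  rewrite (sum_f_R0_tail_zero f M n Hf Hn). unfold Rdist. rewrite Rminus_diag, Rabs_R0. lra.
Qed.

Lemma term_le_sum_f_R0 (f : nat -> R) (i N : nat) :
  (forall k, 0 <= f k) -> (i <= N)%nat -> f i <= sum_f_R0 f N.
Proof.
  intros Hf HiN. induction HiN as [|N HiN IH].
  - destruct i as [|i]; simpl; [lra|]. pose proof (cond_pos_sum f i Hf). lra.
  - rewrite tech5. specialize (Hf (S N)). lra.
Qed.

Lemma infinite_sum_terms_cv_0 (f : nat -> R) (l : R) : infinite_sum f l -> Un_cv f 0.
Proof.
  intros Hl. apply (CV_shift f 1).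
  replace (fun n => f (n + 1)%nat)
    with (fun n => sum_f_R0 f (S n) - sum_f_R0 f n)
    by (apply functional_extensionality; intro n; rewrite tech5, Nat.add_1_r; ring).
  replace 0 with (l - l) by ring. apply CV_minus; [|exact Hl].
  apply (CV_shift' _ 1) in Hl. intros eps Heps. destruct (Hl eps Heps) as [N HN].
  exists N. intros n Hn. rewrite <- Nat.add_1_r. apply HN, Hn.
Qed.

Lemma Un_cv_ge_eventually (u : nat -> R) (l c : R) (N0 : nat) :
  Un_cv u l -> (forall n, (N0 <= n)%nat -> c <= u n) -> c <= l.
Proof.
  intros Hu Hc. destruct (Rle_or_lt c l) as [H|H]; [exact H|].
  destruct (Hu (c - l)) as [N HN]; [lra|].
  specialize (HN (max N N0) ltac:(lia)). specialize (Hc (max N N0) ltac:(lia)).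
  unfold Rdist in HN. apply Rabs_def2 in HN. lra.
Qed.

Lemma Un_cv_le_eventually (u : nat -> R) (l c : R) (N0 : nat) :
  Un_cv u l -> (forall n, (N0 <= n)%nat -> u n <= c) -> l <= c.
Proof.
  intros Hu Hc. destruct (Rle_or_lt l c) as [H|H]; [exact H|].
  destruct (Hu (l - c)) as [N HN]; [lra|].
  specialize (HN (max N N0) ltac:(lia)). specialize (Hc (max N N0) ltac:(lia)).
  unfold Rdist in HN. apply Rabs_def2 in HN. lra.
Qed.

Lemma Un_cv_const (c : R) : Un_cv (fun _ => c) c.
Proof. intros eps Heps. exists O. intros n _. unfold Rdist. rewrite Rminus_diag, Rabs_R0. lra. Qed.

Lemma Un_cv_sum_f_R0 (f : nat -> nat -> R) (g : nat -> R) (N : nat) :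
  (forall i, Un_cv (fun n => f n i) (g i)) ->
  Un_cv (fun n => sum_f_R0 (f n) N) (sum_f_R0 g N).
Proof.
  intros H. induction N as [|N IH]; simpl; [apply H|].
  apply CV_plus; [exact IH | apply H].
Qed.

Lemma inv_INR_S_eventually_le (eps : R) :
  0 < eps -> exists N, forall n, (N <= n)%nat -> / (INR n + 1) <= eps.
Proof.
  intros Heps. destruct (RinvN_cv (eps := eps) Heps) as [N HN]. exists N. intros n Hn.
  specialize (HN n Hn). unfold Rdist, RinvN in HN; simpl in HN.
  apply Rabs_def2 in HN. lra.
Qed.

Lemma sq_le_abs (x y : R) : 0 <= y -> x ^ 2 <= y ^ 2 -> Rabs x <= y.
Proof. intros Hy H. unfold Rabs. destruct (Rcase_abs x); nra. Qed.

(** * Convex sequences *)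

Lemma convex_increments_le (r : nat -> R) : convex_seq r ->
  forall k m, r (S k) - r k <= r (S (k + m)) - r (k + m)%nat.
Proof.
  intros Hc k m. induction m as [|m IH].
  - rewrite Nat.add_0_r. lra.
  - pose proof (Hc (S (k + m)) ltac:(lia)) as H. unfold Delta in H. simpl in H.
    replace (k + S m)%nat with (S (k + m)) by lia. lra.
Qed.

Lemma square_summable_cv_0 (r : nat -> R) :
  square_summable r -> forall eps, 0 < eps -> exists N, forall n, (N <= n)%nat -> r n ^ 2 < eps.
Proof.
  intros [l Hl] eps Heps. destruct (infinite_sum_terms_cv_0 _ _ Hl eps Heps) as [N HN].
  exists N. intros n Hn. specialize (HN n Hn). unfold Rdist in HN.
  rewrite Rminus_0_r, Rabs_right in HN by (apply Rle_ge, pow2_ge_0). exact HN.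
Qed.

Lemma convex_square_summable_decreasing (r : nat -> R) :
  convex_seq r -> square_summable r -> Un_decreasing r.
Proof.
  intros Hc Hl k. destruct (Rle_or_lt (r (S k)) (r k)) as [H|H]; [exact H|]. exfalso.
  set (d := r (S k) - r k).
  assert (Hgrow : forall m, r k + INR m * d <= r (k + m)%nat).
  { induction m as [|m IH].
    - simpl. rewrite Nat.add_0_r. lra.
    - pose proof (convex_increments_le r Hc k m). rewrite S_INR.
      replace (k + S m)%nat with (S (k + m)) by lia. unfold d in *. lra. }
  destruct (INR_archimed d (1 - r k)) as [m Hm]; [unfold d; lra|].
  destruct (square_summable_cv_0 r Hl 1 ltac:(lra)) as [N HN].
  specialize (HN (N + k + m)%nat ltac:(lia)).
  specialize (Hgrow (N + m)%nat). replace (k + (N + m))%nat with (N + k + m)%nat in Hgrow by lia.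
  assert (INR m * d <= INR (N + m) * d) by (apply Rmult_le_compat_r; [unfold d; lra|apply le_INR; lia]).
  nra.
Qed.

Lemma convex_square_summable_nonneg (r : nat -> R) :
  convex_seq r -> square_summable r -> forall k, 0 <= r k.
Proof.
  intros Hc Hl k. destruct (Rle_or_lt 0 (r k)) as [H|H]; [exact H|]. exfalso.
  destruct (square_summable_cv_0 r Hl (r k ^ 2)) as [N HN]; [nra|].
  specialize (HN (k + N)%nat ltac:(lia)).
  pose proof (decreasing_prop r k (k + N) (convex_square_summable_decreasing r Hc Hl) ltac:(lia)).
  nra.
Qed.

Definition tent (j i : nat) : R := INR (j - i).

Lemma Delta_tent (j k : nat) : (1 <= k)%nat ->
  Delta (tent j) k = if Nat.eqb k j then 1 else 0.
Proof.
  intros Hk. unfold Delta, tent.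
  destruct (Nat.eqb_spec k j) as [<-|E].
  - replace (k - S k)%nat with 0%nat by lia. replace (k - k)%nat with 0%nat by lia.
    replace (k - pred k)%nat with 1%nat by lia. simpl. lra.
  - destruct (Nat.lt_ge_cases k j) as [L|L].
    + replace (j - k)%nat with (S (j - S k)) by lia.
      replace (j - pred k)%nat with (S (S (j - S k))) by lia.
      rewrite !S_INR. lra.
    + replace (j - S k)%nat with 0%nat by lia. replace (j - k)%nat with 0%nat by lia.
      replace (j - pred k)%nat with 0%nat by lia. simpl. lra.
Qed.

Lemma Delta_tent_nonneg (j k : nat) : (1 <= k)%nat -> 0 <= Delta (tent j) k.
Proof. intros Hk. rewrite Delta_tent by exact Hk. destruct (Nat.eqb k j); lra. Qed.

Lemma tent_vanishes (j i : nat) : (j <= i)%nat -> tent j i = 0.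
Proof. intros H. unfold tent. replace (j - i)%nat with 0%nat by lia. reflexivity. Qed.

Lemma Delta_lin (a b : R) (p r : nat -> R) (k : nat) :
  Delta (fun i => a * p i + b * r i) k = a * Delta p k + b * Delta r k.
Proof. unfold Delta. ring. Qed.

(** * Least squares projections *)

Definition convex_upto (m : nat) (p : nat -> R) : Prop :=
  convex_seq p /\ forall i, (m < i)%nat -> p i = 0.

Definition sqdist (m : nat) (q p : nat -> R) : R := sum_f_R0 (fun i => (q i - p i) ^ 2) m.

Lemma convex_upto_conic m p r a b : convex_upto m p -> convex_upto m r -> 0 <= a -> 0 <= b ->
  convex_upto m (fun i => a * p i + b * r i).
Proof.
  intros [Hp Zp] [Hr Zr] Ha Hb. split.
  - intros k Hk. rewrite Delta_lin. specialize (Hp k Hk). specialize (Hr k Hk). nra.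
  - intros i Hi. rewrite Zp, Zr by exact Hi. ring.
Qed.

Lemma convex_upto_closed m (ps : nat -> nat -> R) (p : nat -> R) :
  (forall n, convex_upto m (ps n)) -> (forall i, Un_cv (fun n => ps n i) (p i)) ->
  convex_upto m p.
Proof.
  intros Hps Hlim. split.
  - intros k Hk. unfold Delta.
    apply (Un_cv_ge_eventually (fun n => ps n (S k) - 2 * ps n k + ps n (pred k)) _ 0 O).
    + apply CV_plus; [apply CV_minus|]; [apply Hlim| |apply Hlim].
      apply CV_mult; [apply Un_cv_const|apply Hlim].
    + intros n _. apply (proj1 (Hps n) k Hk).
  - intros i Hi. apply (UL_sequence (fun n => ps n i)); [apply Hlim|].
    replace (fun n => ps n i) with (fun _ : nat => 0); [apply Un_cv_const|].
    apply functional_extensionality. intro n. symmetry. apply (proj2 (Hps n) i Hi).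
Qed.

Lemma sqdist_nonneg m q p : 0 <= sqdist m q p.
Proof. apply cond_pos_sum. intro. apply pow2_ge_0. Qed.

Lemma sqdist_coord_le m q p i : (i <= m)%nat -> (q i - p i) ^ 2 <= sqdist m q p.
Proof. intros Hi. exact (term_le_sum_f_R0 (fun i => (q i - p i) ^ 2) i m (fun _ => pow2_ge_0 _) Hi). Qed.

Lemma sqdist_midpoint m q p r :
  sqdist m p r = 2 * sqdist m q p + 2 * sqdist m q r - 4 * sqdist m q (fun i => / 2 * p i + / 2 * r i).
Proof. unfold sqdist. rewrite !scal_sum, <- sum_plus, <- minus_sum. apply sum_eq. intros. field. Qed.

Lemma Un_cv_sqdist m q (ps : nat -> nat -> R) (p : nat -> R) :
  (forall i, Un_cv (fun n => ps n i) (p i)) -> Un_cv (fun n => sqdist m q (ps n)) (sqdist m q p).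
Proof.
  intros Hlim. apply (Un_cv_sum_f_R0 (fun n i => (q i - ps n i) ^ 2)). intro i. simpl.
  apply CV_mult; [|apply CV_mult; [|apply Un_cv_const]];
    apply CV_minus; (apply Un_cv_const || apply Hlim).
Qed.

Lemma exists_approx_inf {A : Type} (K : A -> Prop) (f : A -> R) :
  (exists a, K a) -> (forall a, K a -> 0 <= f a) ->
  exists d, (forall a, K a -> d <= f a) /\
            forall eps, 0 < eps -> exists a, K a /\ f a < d + eps.
Proof.
  intros [a0 Ha0] Hf.
  set (E := fun y => exists a, K a /\ y = - f a).
  assert (Hb : bound E) by (exists 0; intros y [a [Ha ->]]; specialize (Hf a Ha); lra).
  destruct (completeness E Hb (ex_intro _ (- f a0) (ex_intro _ a0 (conj Ha0 eq_refl))))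
    as [m [Hub Hlub]].
  exists (- m). split.
  - intros a Ha. assert (E (- f a)) by (exists a; auto). specialize (Hub _ H). lra.
  - intros eps Heps. apply NNPP. intro Hno.
    assert (is_upper_bound E (m - eps)).
    { intros y [a [Ha ->]]. destruct (Rle_or_lt (- m + eps) (f a)) as [H|H]; [lra|].
      exfalso. apply Hno. exists a. auto. }
    specialize (Hlub _ H). lra.
Qed.

Lemma Cauchy_crit_of_sq_bound (u : nat -> R) (c : R) :
  (forall n k, (u n - u k) ^ 2 <= c * (/ (INR n + 1) + / (INR k + 1))) -> Cauchy_crit u.
Proof.
  intros Hu eps Heps.
  assert (Hc : 0 <= c).
  { specialize (Hu O O). simpl in Hu. rewrite Rplus_0_l, Rinv_1 in Hu. nra. }
  destruct (inv_INR_S_eventually_le (eps ^ 2 / (8 * c + 8))) as [N HN].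
  { apply Rdiv_lt_0_compat; [nra|lra]. }
  exists N. intros n k Hn Hk. unfold Rdist. apply Rle_lt_trans with (eps / 2); [|lra].
  apply sq_le_abs; [lra|]. eapply Rle_trans; [apply Hu|].
  assert (Hx : c * (eps ^ 2 / (8 * c + 8)) <= eps ^ 2 / 8).
  { apply Rmult_le_reg_r with (8 * c + 8); [lra|]. unfold Rdiv.
    rewrite Rmult_assoc, (Rmult_assoc (eps ^ 2)), Rinv_l by lra. nra. }
  pose proof (HN n Hn). pose proof (HN k Hk).
  assert (c * (/ (INR n + 1) + / (INR k + 1)) <= 2 * (c * (eps ^ 2 / (8 * c + 8)))) by nra.
  lra.
Qed.

Lemma sqdist_min_exists m q :
  exists p, convex_upto m p /\ forall r, convex_upto m r -> sqdist m q p <= sqdist m q r.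
Proof.
  assert (H0 : convex_upto m (fun _ => 0)) by (split; [intros k _; unfold Delta; lra|reflexivity]).
  destruct (exists_approx_inf (convex_upto m) (sqdist m q) (ex_intro _ _ H0)
              (fun r _ => sqdist_nonneg m q r))
    as [d [Hd Happrox]].
  destruct (functional_choice (fun (n : nat) r => convex_upto m r /\ sqdist m q r < d + / (INR n + 1)))
    as [ps Hps].
  { intro n. apply Happrox, Rinv_0_lt_compat. pose proof (pos_INR n). lra. }
  (* minimizing sequences are Cauchy, by the parallelogram identity *)
  assert (Hcauchy : forall i, Cauchy_crit (fun n => ps n i)).
  { intro i. apply (Cauchy_crit_of_sq_bound _ 2). intros n k.
    destruct (Hps n) as [Kn Qn]. destruct (Hps k) as [Kk Qk].
    pose proof (Hd _ (convex_upto_conic m _ _ (/ 2) (/ 2) Kn Kk ltac:(lra) ltac:(lra))) as Qmid.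
    pose proof (sqdist_midpoint m q (ps n) (ps k)) as Hpar.
    destruct (Nat.le_gt_cases i m) as [Hi|Hi].
    - pose proof (sqdist_coord_le m (ps n) (ps k) i Hi). lra.
    - rewrite (proj2 Kn i Hi), (proj2 Kk i Hi).
      pose proof (pos_INR n). pose proof (pos_INR k).
      assert (0 < / (INR n + 1)) by (apply Rinv_0_lt_compat; lra).
      assert (0 < / (INR k + 1)) by (apply Rinv_0_lt_compat; lra).
      simpl. lra. }
  set (p := fun i => proj1_sig (R_complete _ (Hcauchy i))).
  assert (Hlim : forall i, Un_cv (fun n => ps n i) (p i)).
  { intro i. unfold p. destruct (R_complete _ (Hcauchy i)) as [l Hl]. exact Hl. }
  exists p. split; [exact (convex_upto_closed m ps p (fun n => proj1 (Hps n)) Hlim)|].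
  intros r Hr. apply Rle_trans with d; [|exact (Hd r Hr)].
  apply Rnot_lt_le. intro Hlt.
  destruct (inv_INR_S_eventually_le ((sqdist m q p - d) / 2)) as [N HN]; [lra|].
  assert (sqdist m q p <= d + (sqdist m q p - d) / 2); [|lra].
  apply (Un_cv_le_eventually _ _ _ N (Un_cv_sqdist m q ps p Hlim)).
  intros n Hn. pose proof (proj2 (Hps n)). pose proof (HN n Hn). lra.
Qed.

Lemma sqdist_min_first_order m q p v t0 :
  (forall r, convex_upto m r -> sqdist m q p <= sqdist m q r) -> 0 < t0 ->
  (forall t, 0 < t -> t <= t0 -> convex_upto m (fun i => p i + t * v i)) ->
  sum_f_R0 (fun i => (q i - p i) * v i) m <= 0.
Proof.
  intros Hmin Ht0 HK.
  set (A := sum_f_R0 (fun i => (q i - p i) * v i) m).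
  set (B := sum_f_R0 (fun i => v i ^ 2) m).
  assert (HB : 0 <= B) by (apply cond_pos_sum; intro; apply pow2_ge_0).
  assert (Hexp : forall t, sqdist m q (fun i => p i + t * v i) = sqdist m q p - 2 * t * A + t ^ 2 * B).
  { intro t. unfold sqdist, A, B. rewrite !scal_sum, <- minus_sum, <- sum_plus.
    apply sum_eq. intros. ring. }
  apply Rnot_lt_le. intro HA.
  set (t := Rmin t0 (A / (B + 1))).
  assert (Hq : 0 < A / (B + 1)) by (apply Rdiv_lt_0_compat; lra).
  assert (Htp : 0 < t) by (unfold t; apply Rmin_glb_lt; lra).
  assert (HtB : t * (B + 1) <= A).
  { apply Rle_trans with (A / (B + 1) * (B + 1)); [apply Rmult_le_compat_r; [lra|apply Rmin_r]|].
    right. field. lra. }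
  specialize (Hmin _ (HK t Htp (Rmin_l _ _))). rewrite Hexp in Hmin. nra.
Qed.

Definition tent_moment (e : nat -> R) (M j : nat) : R := sum_f_R0 (fun i => e i * tent j i) M.

Lemma tent_moment_0 e M : tent_moment e M 0 = 0.
Proof.
  unfold tent_moment. rewrite (sum_eq _ (fun _ => 0)); [rewrite sum_cte; ring|].
  intros. unfold tent. simpl. ring.
Qed.

Lemma tent_moment_S e M j : (j <= M)%nat ->
  tent_moment e M (S j) = tent_moment e M j + sum_f_R0 e j.
Proof.
  intros HjM. unfold tent_moment.
  assert (Hcut : sum_f_R0 e j = sum_f_R0 (fun i => if (i <=? j)%nat then e i else 0) M).
  { rewrite (sum_f_R0_tail_zero _ j M);
      [| intros i Hi; destruct (Nat.leb_spec i j); [lia|reflexivity] | exact HjM].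
    apply sum_eq. intros i Hi. destruct (Nat.leb_spec i j); [reflexivity|lia]. }
  rewrite Hcut, <- sum_plus. apply sum_eq. intros i _. unfold tent.
  destruct (Nat.leb_spec i j).
  - replace (S j - i)%nat with (S (j - i)) by lia. rewrite S_INR. ring.
  - replace (S j - i)%nat with 0%nat by lia. replace (j - i)%nat with 0%nat by lia. simpl. ring.
Qed.

Fixpoint weighted_Delta_sum (E r : nat -> R) (n : nat) : R :=
  match n with
  | O => 0
  | S k => weighted_Delta_sum E r k + E (S k) * Delta r (S k)
  end.

Lemma abel_summation e M r n : (S n <= M)%nat ->
  sum_f_R0 (fun i => e i * r i) (S n) =
  sum_f_R0 e (S n) * r (S n) - tent_moment e M (S n) * (r (S n) - r n)
  + weighted_Delta_sum (tent_moment e M) r n.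
Proof.
  induction n as [|n IH]; intros H.
  - rewrite tent_moment_S, tent_moment_0 by lia. simpl. ring.
  - rewrite tech5, IH by lia. rewrite (tent_moment_S e M (S n)) by lia.
    simpl weighted_Delta_sum. unfold Delta. simpl pred. rewrite (tech5 e (S n)). ring.
Qed.

Lemma weighted_Delta_sum_nonpos E r n :
  (forall k, (1 <= k <= n)%nat -> E k <= 0) -> convex_seq r -> weighted_Delta_sum E r n <= 0.
Proof.
  intros HE Hc. induction n as [|n IH]; simpl; [lra|].
  assert (weighted_Delta_sum E r n <= 0) by (apply IH; intros; apply HE; lia).
  pose proof (HE (S n) ltac:(lia)). pose proof (Hc (S n) ltac:(lia)). nra.
Qed.

Lemma sum_f_R0_opp_r (f g : nat -> R) N :
  sum_f_R0 (fun i => f i * - g i) N = - sum_f_R0 (fun i => f i * g i) N.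
Proof.
  replace (- sum_f_R0 (fun i => f i * g i) N) with (-1 * sum_f_R0 (fun i => f i * g i) N) by ring.
  rewrite scal_sum. apply sum_eq. intros. ring.
Qed.

Lemma ls_terms_sum q p N : sum_f_R0 (ls_terms q p) N = / 2 * sqdist N q p.
Proof. unfold sqdist. rewrite scal_sum. apply sum_eq. intros. unfold ls_terms. ring. Qed.

Section ProjectionWithKnot.

Variables (s : nat) (q ps : nat -> R).
Hypothesis q_vanishes : forall i, (S s < i)%nat -> q i = 0.
Hypothesis ps_cone : convex_upto (S s) ps.
Hypothesis ps_min : forall r, convex_upto (S s) r -> sqdist (S s) q ps <= sqdist (S s) q r.
Hypothesis ps_knot : 0 < Delta ps (S s).

Let e i := q i - ps i.

Lemma residual_tent_nonpos j : (j <= S (S s))%nat -> tent_moment e (S s) j <= 0.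
Proof.
  intros Hj. apply (sqdist_min_first_order (S s) q ps (tent j) 1 ps_min); [lra|].
  intros t Ht _. split.
  - intros k Hk.
    pose proof (Delta_tent_nonneg j k Hk). pose proof (proj1 ps_cone k Hk).
    replace (Delta (fun i => ps i + t * tent j i) k) with (Delta ps k + t * Delta (tent j) k)
      by (unfold Delta; ring).
    nra.
  - intros i Hi. rewrite (proj2 ps_cone i Hi), tent_vanishes by lia. ring.
Qed.

(* moving the kink at [S s] downwards keeps [ps] convex, which forces equality *)
Lemma residual_tent_knot : tent_moment e (S s) (S s) = 0.
Proof.
  apply Rle_antisym; [apply residual_tent_nonpos; lia|].
  pose proof (sqdist_min_first_order (S s) q ps (fun i => - tent (S s) i) _ ps_min ps_knot) as H.
  cbv beta in H. rewrite sum_f_R0_opp_r in H. unfold tent_moment.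
  enough (- sum_f_R0 (fun i => (q i - ps i) * tent (S s) i) (S s) <= 0) by (unfold e; lra).
  apply H. intros t Ht1 Ht2. split.
  - intros k Hk.
    replace (Delta (fun i => ps i + t * - tent (S s) i) k) with (Delta ps k - t * Delta (tent (S s)) k)
      by (unfold Delta; ring).
    rewrite Delta_tent by exact Hk. pose proof (proj1 ps_cone k Hk).
    destruct (Nat.eqb_spec k (S s)) as [->|_]; lra.
  - intros i Hi. rewrite (proj2 ps_cone i Hi), tent_vanishes by lia. ring.
Qed.

Lemma residual_projection_nonneg : 0 <= sum_f_R0 (fun i => e i * ps i) (S s).
Proof.
  pose proof (sqdist_min_first_order (S s) q ps (fun i => - ps i) 1 ps_min ltac:(lra)) as H.
  cbv beta in H. rewrite sum_f_R0_opp_r in H.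
  enough (- sum_f_R0 (fun i => e i * ps i) (S s) <= 0) by lra.
  apply H. intros t Ht1 Ht2.
  replace (fun i => ps i + t * - ps i) with (fun i => (1 - t) * ps i + 0 * ps i)
    by (apply functional_extensionality; intro; ring).
  apply convex_upto_conic; auto; lra.
Qed.

(* by Abel summation, [sum e r] combines the nonpositive tent moments with the nonnegative
   weights [Delta r k] and [r (S s)] *)
Lemma residual_convex_nonpos r : convex_seq r -> 0 <= r (S s) ->
  sum_f_R0 (fun i => e i * r i) (S s) <= 0.
Proof.
  intros Hr Hr0. rewrite (abel_summation e (S s) r s (le_n _)), residual_tent_knot.
  assert (Hsum : sum_f_R0 e (S s) <= 0).
  { pose proof (tent_moment_S e (S s) (S s) (le_n _)) as H. rewrite residual_tent_knot in H.
    pose proof (residual_tent_nonpos (S (S s)) (le_n _)). lra. }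
  pose proof (weighted_Delta_sum_nonpos (tent_moment e (S s)) r s
                (fun k Hk => residual_tent_nonpos k ltac:(lia)) Hr).
  nra.
Qed.

Lemma projection_pythagoras r N : convex_seq r -> 0 <= r (S s) -> (S s <= N)%nat ->
  sqdist (S s) q ps + sqdist N ps r <= sqdist N q r.
Proof.
  intros Hr Hr0 HN.
  assert (He : forall i, (S s < i)%nat -> e i = 0).
  { intros i Hi. unfold e. rewrite q_vanishes, (proj2 ps_cone i Hi) by exact Hi. ring. }
  assert (Hexp : sqdist N q r = sum_f_R0 (fun i => e i ^ 2) N
       + 2 * sum_f_R0 (fun i => e i * ps i - e i * r i) N + sqdist N ps r).
  { unfold sqdist. rewrite scal_sum, <- !sum_plus. apply sum_eq. intros. unfold e. ring. }
  rewrite Hexp.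
  rewrite (sum_f_R0_tail_zero (fun i => e i ^ 2) (S s) N),
    (sum_f_R0_tail_zero (fun i => e i * ps i - e i * r i) (S s) N)
    by (try exact HN; intros i Hi; rewrite He by exact Hi; ring).
  rewrite minus_sum.
  pose proof (residual_convex_nonpos r Hr Hr0). pose proof residual_projection_nonneg.
  change (sqdist (S s) q ps) with (sum_f_R0 (fun i => e i ^ 2) (S s)). lra.
Qed.

Lemma projection_in_C : in_C ps.
Proof.
  split; [exact (proj1 ps_cone)|]. exists (sum_f_R0 (fun k => ps k ^ 2) (S s)).
  apply infinite_sum_finite. intros i Hi. rewrite (proj2 ps_cone i Hi). ring.
Qed.

Lemma projection_ls_sum : infinite_sum (ls_terms q ps) (/ 2 * sqdist (S s) q ps).
Proof.
  rewrite <- ls_terms_sum. apply infinite_sum_finite. intros i Hi. unfold ls_terms.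
  rewrite q_vanishes, (proj2 ps_cone i Hi) by exact Hi. ring.
Qed.

Lemma projection_is_LSE : is_LSE q ps.
Proof.
  split; [exact projection_in_C|]. split; [eexists; exact projection_ls_sum|].
  intros r [Hr Hr2] a b Ha Hb. rewrite (uniqueness_sum _ _ _ Ha projection_ls_sum).
  apply (Un_cv_ge_eventually _ _ _ (S s) Hb). intros N HN. rewrite ls_terms_sum.
  pose proof (projection_pythagoras r N Hr (convex_square_summable_nonneg r Hr Hr2 _) HN).
  pose proof (sqdist_nonneg N ps r). lra.
Qed.

Lemma is_LSE_eq_projection p : is_LSE q p -> forall k, p k = ps k.
Proof.
  intros [[Hp Hp2] [[b Hb] Hpmin]] k.
  pose proof (Hpmin ps projection_in_C b _ Hb projection_ls_sum) as Hba.
  set (N := max k (S s)).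
  assert (Hle : sum_f_R0 (ls_terms q p) N <= b).
  { apply sum_incr; [exact Hb|]. intro j. unfold ls_terms. pose proof (pow2_ge_0 (q j - p j)). lra. }
  rewrite ls_terms_sum in Hle.
  pose proof (projection_pythagoras p N Hp (convex_square_summable_nonneg p Hp Hp2 _)
                ltac:(unfold N; lia)).
  pose proof (sqdist_coord_le N ps p k ltac:(unfold N; lia)).
  assert ((ps k - p k) ^ 2 <= 0) by lra.
  assert (ps k - p k = 0) by nra. lra.
Qed.

End ProjectionWithKnot.

Lemma support_of_decreasing_convex_upto s p :
  convex_upto (S s) p -> Un_decreasing p -> 0 < p s ->
  (forall k, support p k <-> (k <= s)%nat) \/ (forall k, support p k <-> (k <= s + 1)%nat).
Proof.
  intros [_ Hz] Hdec Hs. unfold support.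
  assert (Hpos : forall k, (k <= s)%nat -> 0 < p k).
  { intros k Hk. pose proof (decreasing_prop p k s Hdec Hk). lra. }
  destruct (Req_dec (p (S s)) 0) as [H0|H0]; [left|right]; intro k; split.
  - intro H. destruct (Nat.le_gt_cases k s) as [L|L]; [exact L|]. exfalso. apply H.
    destruct (Nat.eq_dec k (S s)) as [->|Hk]; [exact H0|]. apply Hz. lia.
  - intro L. pose proof (Hpos k L). lra.
  - intro H. destruct (Nat.le_gt_cases k (s + 1)) as [L|L]; [exact L|]. exfalso.
    apply H, Hz. lia.
  - intro L. destruct (Nat.le_gt_cases k s) as [L2|L2].
    + pose proof (Hpos k L2). lra.
    + replace k with (S s) by lia. exact H0.
Qed.

Section NearTruePmf.

Variables (p0 : nat -> R) (s : nat).
Hypothesis p0_nonneg : forall k, 0 <= p0 k.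
Hypothesis p0_convex : convex_seq p0.
Hypothesis p0_support : forall k, p0 k <> 0 <-> (k <= s)%nat.

Lemma p0_vanishes i : (s < i)%nat -> p0 i = 0.
Proof. intros Hi. apply NNPP. intro H. apply p0_support in H. lia. Qed.

Lemma p0_last_pos : 0 < p0 s.
Proof.
  destruct (Rle_lt_or_eq_dec 0 (p0 s) (p0_nonneg s)) as [H|H]; [exact H|].
  exfalso. apply (proj2 (p0_support s) (le_n s)). auto.
Qed.

Let eta := p0 s / (8 * INR (S (S s))).

Lemma eta_pos : 0 < eta.
Proof.
  pose proof p0_last_pos. apply Rdiv_lt_0_compat; [lra|].
  pose proof (pos_INR (S s)). rewrite S_INR. lra.
Qed.

(* since [p0] is itself a candidate, the projection of [q] is within [p0 s / 8] of [q] *)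
Lemma projection_near_p0 q ps :
  (forall i, (s < i)%nat -> q i = 0) -> (forall i, (i <= s)%nat -> Rabs (q i - p0 i) < eta) ->
  (forall r, convex_upto (S s) r -> sqdist (S s) q ps <= sqdist (S s) q r) ->
  Rabs (ps (S s)) <= p0 s / 8 /\ 3 * p0 s / 4 <= ps s.
Proof.
  intros Hq Hclose Hmin.
  pose proof p0_last_pos as Ha0. set (a0 := p0 s) in *.
  set (n2 := INR (S (S s))).
  assert (Hn2 : 1 <= n2) by (unfold n2; rewrite S_INR; pose proof (pos_INR (S s)); lra).
  assert (Heta8 : eta <= a0 / 8).
  { unfold eta. apply Rmult_le_compat_l; [lra|]. apply Rinv_le_contravar; fold n2; lra. }
  assert (Hp0 : sqdist (S s) q p0 <= eta ^ 2 * n2).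
  { unfold n2. rewrite <- sum_cte. apply sum_Rle. intros i _.
    destruct (Nat.le_gt_cases i s) as [L|L].
    - specialize (Hclose i L). apply Rabs_def2 in Hclose. nra.
    - rewrite Hq, p0_vanishes by exact L. pose proof (pow2_ge_0 eta). lra. }
  assert (Heta2 : eta ^ 2 * n2 <= (a0 / 8) ^ 2).
  { replace (eta ^ 2 * n2) with ((a0 / 8) ^ 2 / n2) by (unfold eta; fold n2; field; lra).
    apply Rmult_le_reg_r with n2; [lra|]. unfold Rdiv. rewrite Rmult_assoc, Rinv_l by lra.
    pose proof (pow2_ge_0 (a0 / 8)). nra. }
  assert (Hcone : convex_upto (S s) p0)
    by (split; [exact p0_convex|intros i Hi; apply p0_vanishes; lia]).
  assert (Hfit : forall i, (i <= S s)%nat -> Rabs (q i - ps i) <= a0 / 8).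
  { intros i Hi. apply sq_le_abs; [lra|].
    pose proof (sqdist_coord_le (S s) q ps i Hi). pose proof (Hmin p0 Hcone). lra. }
  split.
  - pose proof (Hfit (S s) (le_n _)) as H. rewrite Hq in H by lia.
    rewrite Rminus_0_l, Rabs_Ropp in H. exact H.
  - pose proof (Hfit s ltac:(lia)). pose proof (Rle_abs (q s - ps s)).
    pose proof (Hclose s (le_n _)) as H2. apply Rabs_def2 in H2. fold a0 in H2. lra.
Qed.

Theorem LSE_support_near_p0 : exists eta, 0 < eta /\ forall q : nat -> R,
    (forall i, (s < i)%nat -> q i = 0) ->
    (forall i, (i <= s)%nat -> Rabs (q i - p0 i) < eta) ->
    (exists p, is_LSE q p) /\
    forall p, is_LSE q p ->
      (forall k, support p k <-> (k <= s)%nat) \/ (forall k, support p k <-> (k <= s + 1)%nat).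
Proof.
  exists eta. split; [exact eta_pos|]. intros q Hq Hclose.
  destruct (sqdist_min_exists (S s) q) as [ps [Hps Hmin]].
  destruct (projection_near_p0 q ps Hq Hclose Hmin) as [Hlast Hps_s].
  pose proof p0_last_pos.
  assert (Hknot : 0 < Delta ps (S s)).
  { unfold Delta. simpl pred. rewrite (proj2 Hps (S (S s))) by lia.
    pose proof (Rle_abs (ps (S s))). lra. }
  assert (Hq' : forall i, (S s < i)%nat -> q i = 0) by (intros; apply Hq; lia).
  split; [exists ps; exact (projection_is_LSE s q ps Hq' Hps Hmin Hknot)|].
  intros p Hp.
  replace p with ps by (apply functional_extensionality; intro k;
                        symmetry; exact (is_LSE_eq_projection s q ps Hq' Hps Hmin Hknot p Hp k)).
  destruct (projection_in_C s ps Hps) as [Hc Hl2].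
  apply support_of_decreasing_convex_upto; [exact Hps| |lra].
  exact (convex_square_summable_decreasing ps Hc Hl2).
Qed.

End NearTruePmf.

(** * Probability spaces *)

Lemma event_ext {Omega : Type} (A B : Omega -> Prop) : (forall w, A w <-> B w) -> A = B.
Proof. intros H. apply functional_extensionality. intro w. apply propositional_extensionality, H. Qed.

Section Measurability.

Context {Omega : Type} {F : (Omega -> Prop) -> Prop}.
Hypothesis HF : sigma_algebra F.

Lemma measurable_True : F (fun _ => True).
Proof. exact (proj1 HF). Qed.

Lemma measurable_not A : F A -> F (fun w => ~ A w).
Proof. apply (proj1 (proj2 HF)). Qed.

Lemma measurable_ex (A : nat -> Omega -> Prop) : (forall n, F (A n)) -> F (fun w => exists n, A n w).
Proof. apply (proj2 (proj2 HF)). Qed.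

Lemma measurable_False : F (fun _ => False).
Proof.
  replace (fun _ : Omega => False) with (fun _ : Omega => ~ True)
    by (apply event_ext; tauto).
  apply measurable_not, measurable_True.
Qed.

Lemma measurable_or A B : F A -> F B -> F (fun w => A w \/ B w).
Proof.
  intros HA HB.
  replace (fun w => A w \/ B w) with (fun w => exists n : nat, (match n with O => A | _ => B end) w).
  - apply measurable_ex. intros [|n]; assumption.
  - apply event_ext. intro w. split.
    + intros [[|n] Hn]; [left|right]; exact Hn.
    + intros [Ha|Hb]; [exists O|exists 1%nat]; assumption.
Qed.

Lemma measurable_and A B : F A -> F B -> F (fun w => A w /\ B w).
Proof.
  intros HA HB.
  replace (fun w => A w /\ B w) with (fun w => ~ (~ A w \/ ~ B w))
    by (apply event_ext; intro w; tauto).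
  apply measurable_not, measurable_or; apply measurable_not; assumption.
Qed.

Lemma measurable_all (A : nat -> Omega -> Prop) : (forall n, F (A n)) -> F (fun w => forall n, A n w).
Proof.
  intros HA.
  replace (fun w => forall n, A n w) with (fun w => ~ exists n, ~ A n w).
  - apply measurable_not, measurable_ex. intro n. apply measurable_not, HA.
  - apply event_ext. intro w. split.
    + intros Hw n. apply NNPP. intro Hn. apply Hw. exists n. exact Hn.
    + intros Hw [n Hn]. apply Hn, Hw.
Qed.

Lemma measurable_const_and (Q : Prop) A : F A -> F (fun w => Q /\ A w).
Proof.
  intros HA. destruct (classic Q) as [HQ|HQ].
  - replace (fun w => Q /\ A w) with A by (apply event_ext; tauto). exact HA.
  - replace (fun w => Q /\ A w) with (fun _ : Omega => False) by (apply event_ext; tauto).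
    apply measurable_False.
Qed.

End Measurability.

Definition eventually_not {Omega : Type} (B : nat -> Omega -> Prop) (w : Omega) : Prop :=
  exists N, forall n, (N <= n)%nat -> ~ B n w.

Section Probability.

Context {Omega : Type} {F : (Omega -> Prop) -> Prop} {P : (Omega -> Prop) -> R}.
Hypothesis HP : is_prob_space F P.

Let HF : sigma_algebra F := proj1 HP.

Lemma P_nonneg A : F A -> 0 <= P A.
Proof. apply (proj1 (proj2 HP)). Qed.

Lemma P_True : P (fun _ => True) = 1.
Proof. exact (proj1 (proj2 (proj2 HP))). Qed.

Lemma P_ex_disjoint (A : nat -> Omega -> Prop) :
  (forall n, F (A n)) -> (forall n m w, n <> m -> A n w -> A m w -> False) ->
  infinite_sum (fun n => P (A n)) (P (fun w => exists n, A n w)).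
Proof. apply (proj2 (proj2 (proj2 HP))). Qed.

Lemma P_False : P (fun _ => False) = 0.
Proof.
  pose proof (P_ex_disjoint (fun _ _ => False) (fun _ => measurable_False HF) ltac:(tauto)) as H.
  replace (fun w : Omega => exists _ : nat, False) with (fun _ : Omega => False) in H
    by (apply event_ext; intro w; split; [tauto|intros [_ []]]).
  pose proof (infinite_sum_terms_cv_0 _ _ H) as H0.
  apply (UL_sequence (fun _ => P (fun _ => False))); [apply Un_cv_const|exact H0].
Qed.

Lemma P_or_disjoint A B : F A -> F B -> (forall w, A w -> B w -> False) ->
  P (fun w => A w \/ B w) = P A + P B.
Proof.
  intros HA HB Hd.
  set (C := fun n : nat => match n with O => A | 1%nat => B | _ => fun _ => False end).
  assert (HC : forall n, F (C n)) by (intros [|[|n]]; simpl; auto; apply measurable_False, HF).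
  assert (HCd : forall n m w, n <> m -> C n w -> C m w -> False).
  { intros [|[|n]] [|[|m]] w Hnm; simpl; try tauto; intros; eauto. }
  pose proof (P_ex_disjoint C HC HCd) as Hsum.
  replace (fun w => exists n, C n w) with (fun w => A w \/ B w) in Hsum.
  - rewrite (uniqueness_sum _ _ _ Hsum (infinite_sum_finite (fun n => P (C n)) 1%nat
      ltac:(intros [|[|i]] Hi; [lia|lia|exact P_False]))).
    simpl. ring.
  - apply event_ext. intro w. split.
    + intros [Ha|Hb]; [exists O|exists 1%nat]; assumption.
    + intros [[|[|n]] Hn]; simpl in Hn; tauto.
Qed.

Lemma P_not A : F A -> P (fun w => ~ A w) = 1 - P A.
Proof.
  intros HA.
  pose proof (P_or_disjoint A (fun w => ~ A w) HA (measurable_not HF A HA)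
                (fun w Ha Hna => Hna Ha)) as H.
  cbv beta in H.
  replace (fun w => A w \/ ~ A w) with (fun _ : Omega => True) in H
    by (apply event_ext; intro w; pose proof (classic (A w)); tauto).
  rewrite P_True in H. lra.
Qed.

Lemma P_mono A B : F A -> F B -> (forall w, A w -> B w) -> P A <= P B.
Proof.
  intros HA HB Hs.
  assert (HC : F (fun w => B w /\ ~ A w)) by (apply measurable_and, measurable_not; auto).
  pose proof (P_or_disjoint A (fun w => B w /\ ~ A w) HA HC (fun w Ha Hb => proj2 Hb Ha)) as H.
  cbv beta in H.
  replace (fun w => A w \/ (B w /\ ~ A w)) with B in H
    by (apply event_ext; intro w; pose proof (classic (A w)); pose proof (Hs w); tauto).
  pose proof (P_nonneg _ HC). lra.
Qed.

Lemma P_le_1 A : F A -> P A <= 1.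
Proof.
  intros HA. rewrite <- P_True.
  apply P_mono; auto. apply measurable_True, HF.
Qed.

Lemma P_ex_le (A : nat -> Omega -> Prop) (c : R) : (forall n, F (A n)) ->
  (forall M, sum_f_R0 (fun n => P (A n)) M <= c) -> P (fun w => exists n, A n w) <= c.
Proof.
  intros HA Hc.
  (* disjointify: keep the first index at which [A] holds *)
  set (A' := fun n w => A n w /\ ~ (exists k, (k < n)%nat /\ A k w)).
  assert (HA' : forall n, F (A' n)).
  { intro n. apply measurable_and, measurable_not, measurable_ex; auto.
    intro k. apply measurable_const_and; auto. }
  assert (Hd : forall n m w, n <> m -> A' n w -> A' m w -> False).
  { intros n m w Hnm [Hn Hn'] [Hm Hm'].
    destruct (Nat.lt_total n m) as [L|[L|L]]; [apply Hm'; eauto|lia|apply Hn'; eauto]. }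
  pose proof (P_ex_disjoint A' HA' Hd) as Hsum.
  replace (fun w => exists n, A' n w) with (fun w => exists n, A n w) in Hsum.
  - apply (Un_cv_le_eventually _ _ _ O Hsum). intros M _. eapply Rle_trans; [|apply (Hc M)].
    apply sum_Rle. intros n _. apply P_mono; auto. intros w [H _]. exact H.
  - apply event_ext. intro w. split.
    + intros [n Hn]. revert Hn. induction n as [n IH] using (well_founded_induction Wf_nat.lt_wf).
      intro Hn. destruct (classic (exists k, (k < n)%nat /\ A k w)) as [[k [Hk1 Hk2]]|Hno].
      * exact (IH k Hk1 Hk2).
      * exists n. split; assumption.
    + intros [n [Hn _]]. exists n. exact Hn.
Qed.

Lemma P_and_almost_sure A B : F A -> F B -> P A = 1 -> P B = 1 -> P (fun w => A w /\ B w) = 1.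
Proof.
  intros HA HB H1 H2.
  assert (HAB : F (fun w => A w /\ B w)) by (apply measurable_and; auto).
  set (C := fun n : nat => match n with O => fun w => ~ A w | _ => fun w => ~ B w end).
  assert (HC : forall n, F (C n)) by (intros [|n]; apply measurable_not; auto).
  assert (Hnot : P (fun w => exists n, C n w) <= 0).
  { apply P_ex_le; [exact HC|]. intro M. rewrite (sum_eq _ (fun _ => 0)); [rewrite sum_cte; lra|].
    intros [|n] _; simpl; rewrite P_not; auto; lra. }
  assert (P (fun w => ~ (A w /\ B w)) <= P (fun w => exists n, C n w)).
  { apply P_mono; [apply measurable_not; auto|apply measurable_ex; auto|].
    intros w Hw. destruct (classic (A w)); [exists 1%nat|exists O]; simpl; tauto. }
  rewrite P_not in H by exact HAB. pose proof (P_le_1 _ HAB). lra.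
Qed.

Lemma borel_cantelli (B : nat -> Omega -> Prop) :
  (forall n, F (B n)) ->
  (forall eps, 0 < eps -> exists N, forall M, sum_f_R0 (fun k => P (B (N + k)%nat)) M <= eps) ->
  F (eventually_not B) /\ P (eventually_not B) = 1.
Proof.
  intros HB Htail. set (G := eventually_not B).
  assert (HG : F G).
  { unfold G, eventually_not. apply (measurable_ex HF). intro N. apply (measurable_all HF). intro n.
    replace (fun w => (N <= n)%nat -> ~ B n w) with (fun w => ~ ((N <= n)%nat /\ B n w))
      by (apply event_ext; intro w; tauto).
    apply measurable_not, measurable_const_and; auto. }
  split; [exact HG|].
  apply Rle_antisym; [exact (P_le_1 G HG)|]. apply Rnot_lt_le. intro Hlt.
  destruct (Htail ((1 - P G) / 2) ltac:(lra)) as [N HN].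
  assert (HU : F (fun w => exists k, B (N + k)%nat w)) by (apply measurable_ex; auto).
  pose proof (P_ex_le (fun k => B (N + k)%nat) _ (fun k => HB _) HN).
  assert (P (fun w => ~ exists k, B (N + k)%nat w) <= P G).
  { apply P_mono; [apply measurable_not; auto|exact HG|].
    intros w Hw. exists N. intros n Hn HBn. apply Hw. exists (n - N)%nat.
    replace (N + (n - N))%nat with n by lia. exact HBn. }
  rewrite P_not in H0 by exact HU. lra.
Qed.

End Probability.

(** * Product laws *)

Definition upd (c : nat -> nat) (n x : nat) : nat -> nat :=
  fun i => if Nat.eqb i n then x else c i.

Lemma upd_eq c n x : upd c n x n = x.
Proof. unfold upd. rewrite Nat.eqb_refl. reflexivity. Qed.

Lemma upd_neq c n x i : i <> n -> upd c n x i = c i.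
Proof. intros H. unfold upd. apply Nat.eqb_neq in H. rewrite H. reflexivity. Qed.

Lemma upd_same c n i : upd c n (c n) i = c i.
Proof. unfold upd. destruct (Nat.eqb_spec i n); subst; reflexivity. Qed.

(* [config_sum s n g] sums [g c] over the configurations [c] with [c i <= s] for [i < n]
   and [c i = 0] for [i >= n] *)
Fixpoint config_sum (s n : nat) (g : (nat -> nat) -> R) : R :=
  match n with
  | O => g (fun _ => O)
  | S k => config_sum s k (fun c => sum_f_R0 (fun x => g (upd c k x)) s)
  end.

Lemma config_sum_ext s n g h : (forall c, g c = h c) -> config_sum s n g = config_sum s n h.
Proof.
  intros H. replace g with h; [reflexivity|].
  apply functional_extensionality. intro; symmetry; auto.
Qed.

Lemma config_sum_plus s n g h :
  config_sum s n (fun c => g c + h c) = config_sum s n g + config_sum s n h.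
Proof.
  revert g h. induction n as [|n IH]; intros g h; simpl; [reflexivity|].
  rewrite <- IH. apply config_sum_ext. intro c. apply sum_plus.
Qed.

Lemma config_sum_scal s n a g : config_sum s n (fun c => a * g c) = a * config_sum s n g.
Proof.
  revert g. induction n as [|n IH]; intros g; simpl; [reflexivity|].
  rewrite <- IH. apply config_sum_ext. intro c. rewrite scal_sum. apply sum_eq. intros. ring.
Qed.

Lemma config_sum_le s n g h : (forall c, g c <= h c) -> config_sum s n g <= config_sum s n h.
Proof.
  revert g h. induction n as [|n IH]; intros g h H; simpl; [apply H|].
  apply IH. intro c. apply sum_Rle. intros. apply H.
Qed.

Lemma config_sum_sum_f_R0 s n (h : nat -> (nat -> nat) -> R) m :
  config_sum s n (fun c => sum_f_R0 (fun x => h x c) m) = sum_f_R0 (fun x => config_sum s n (h x)) m.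
Proof.
  induction m as [|m IH]; simpl; [reflexivity|].
  rewrite config_sum_plus, IH. reflexivity.
Qed.

Definition weight (p0 : nat -> R) (n : nat) (c : nat -> nat) : R := prodR (fun i => p0 (c i)) n.

Lemma prodR_ext f g m : (forall i, (i < m)%nat -> f i = g i) -> prodR f m = prodR g m.
Proof.
  induction m as [|m IH]; intros H; simpl; [reflexivity|].
  rewrite IH by (intros; apply H; lia). rewrite H by lia. reflexivity.
Qed.

Lemma weight_upd p0 n c x : weight p0 (S n) (upd c n x) = weight p0 n c * p0 x.
Proof.
  unfold weight. simpl. rewrite upd_eq. f_equal. apply prodR_ext. intros i Hi.
  rewrite upd_neq by lia. reflexivity.
Qed.

Lemma weight_nonneg p0 n c : (forall k, 0 <= p0 k) -> 0 <= weight p0 n c.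
Proof.
  intros H. unfold weight. induction n as [|n IH]; simpl; [lra|]. specialize (H (c n)). nra.
Qed.

(* expectation under the product law [p0^{⊗n}] of a pmf [p0] supported in [0..s] *)
Definition prod_expect (p0 : nat -> R) (s n : nat) (f : (nat -> nat) -> R) : R :=
  config_sum s n (fun c => weight p0 n c * f c).

Lemma prod_expect_ext p0 s n f g : (forall c, f c = g c) -> prod_expect p0 s n f = prod_expect p0 s n g.
Proof. intros H. unfold prod_expect. apply config_sum_ext. intro c. rewrite H. reflexivity. Qed.

Lemma prod_expect_S p0 s n f :
  prod_expect p0 s (S n) f = prod_expect p0 s n (fun c => sum_f_R0 (fun x => p0 x * f (upd c n x)) s).
Proof.
  unfold prod_expect. simpl. apply config_sum_ext. intro c. rewrite scal_sum.
  apply sum_eq. intros x _. rewrite weight_upd. ring.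
Qed.

Lemma prod_expect_plus p0 s n f g :
  prod_expect p0 s n (fun c => f c + g c) = prod_expect p0 s n f + prod_expect p0 s n g.
Proof.
  unfold prod_expect. rewrite <- config_sum_plus. apply config_sum_ext. intro. ring.
Qed.

Lemma prod_expect_scal p0 s n a f :
  prod_expect p0 s n (fun c => a * f c) = a * prod_expect p0 s n f.
Proof.
  unfold prod_expect. rewrite <- config_sum_scal. apply config_sum_ext. intro. ring.
Qed.

Lemma prod_expect_1 p0 s n : sum_f_R0 p0 s = 1 -> prod_expect p0 s n (fun _ => 1) = 1.
Proof.
  intros H1. induction n as [|n IH]; [unfold prod_expect, weight; simpl; ring|].
  rewrite prod_expect_S. transitivity (prod_expect p0 s n (fun _ => 1)); [|exact IH].
  unfold prod_expect. apply config_sum_ext. intro c.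
  rewrite (sum_eq _ p0 s), H1 by (intros; ring). reflexivity.
Qed.

Lemma prod_expect_le p0 s n f g : (forall k, 0 <= p0 k) -> (forall c, f c <= g c) ->
  prod_expect p0 s n f <= prod_expect p0 s n g.
Proof.
  intros Hp Hfg. apply config_sum_le. intro c.
  apply Rmult_le_compat_l; [apply weight_nonneg, Hp|apply Hfg].
Qed.

Lemma prod_expect_sum_f_R0 p0 s n (h : nat -> (nat -> nat) -> R) m :
  prod_expect p0 s n (fun c => sum_f_R0 (fun j => h j c) m) =
  sum_f_R0 (fun j => prod_expect p0 s n (h j)) m.
Proof.
  unfold prod_expect. rewrite <- config_sum_sum_f_R0. apply config_sum_ext. intro c.
  rewrite scal_sum. apply sum_eq. intros. ring.
Qed.

Definition depends_on (n : nat) (Q : (nat -> nat) -> Prop) : Prop :=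
  forall c c', (forall i, (i < n)%nat -> c i = c' i) -> (Q c <-> Q c').

Lemma depends_on_0 Q c : depends_on 0 Q -> Q c <-> Q (fun _ => O).
Proof. intros H. apply H. intros; lia. Qed.

Lemma depends_on_upd n Q x : depends_on (S n) Q -> depends_on n (fun c => Q (upd c n x)).
Proof.
  intros H c c' Hc. apply H. intros i Hi. unfold upd.
  destruct (Nat.eqb_spec i n); [reflexivity|]. apply Hc. lia.
Qed.

Lemma depends_on_upd_same n Q c : depends_on (S n) Q -> Q (upd c n (c n)) <-> Q c.
Proof. intros H. apply H. intros i _. apply upd_same. Qed.

Lemma cylinder_split n m Q d c : depends_on (S n) Q -> (n < m)%nat ->
  (Q c /\ forall i, (S n <= i < m)%nat -> c i = d i) <->
  exists x, Q (upd c n x) /\ forall i, (n <= i < m)%nat -> c i = upd d n x i.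
Proof.
  intros HQ Hnm. split.
  - intros [H1 H2]. exists (c n). split; [apply depends_on_upd_same; auto|].
    intros i Hi. destruct (Nat.eq_dec i n) as [->|Hin].
    + rewrite upd_eq. reflexivity.
    + rewrite upd_neq by exact Hin. apply H2. lia.
  - intros [x [H1 H2]].
    assert (Hx : c n = x) by (rewrite (H2 n ltac:(lia)); apply upd_eq).
    split.
    + subst x. apply depends_on_upd_same in H1; auto.
    + intros i Hi. rewrite (H2 i ltac:(lia)). apply upd_neq. lia.
Qed.

Definition indicator (Q : Prop) : R := if excluded_middle_informative Q then 1 else 0.

Lemma indicator_true (Q : Prop) : Q -> indicator Q = 1.
Proof. intros H. unfold indicator. destruct (excluded_middle_informative Q); tauto. Qed.

Lemma indicator_false (Q : Prop) : ~ Q -> indicator Q = 0.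
Proof. intros H. unfold indicator. destruct (excluded_middle_informative Q); tauto. Qed.

Definition tail_weight (p0 : nat -> R) (n m : nat) (d : nat -> nat) : R :=
  prodR (fun i => if (i <? n)%nat then 1 else p0 (d i)) m.

Lemma tail_weight_empty p0 n m d : (m <= n)%nat -> tail_weight p0 n m d = 1.
Proof.
  unfold tail_weight. induction m as [|m IH]; intros H; simpl; [reflexivity|].
  rewrite IH by lia. destruct (Nat.ltb_spec m n); [ring|lia].
Qed.

Lemma tail_weight_upd p0 d n x m : (n < m)%nat ->
  tail_weight p0 n m (upd d n x) = p0 x * tail_weight p0 (S n) m d.
Proof.
  unfold tail_weight. induction m as [|m IH]; intros H; [lia|].
  simpl prodR. destruct (Nat.eq_dec m n) as [->|Hmn].
  - fold (tail_weight p0 n n (upd d n x)) (tail_weight p0 (S n) n d).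
    rewrite !tail_weight_empty by lia.
    destruct (Nat.ltb_spec n n); [lia|]. destruct (Nat.ltb_spec n (S n)); [|lia].
    rewrite upd_eq. ring.
  - rewrite IH by lia. destruct (Nat.ltb_spec m n); [lia|]. destruct (Nat.ltb_spec m (S n)); [lia|].
    rewrite upd_neq by lia. ring.
Qed.

Section IidSample.

Context {Omega : Type} {F : (Omega -> Prop) -> Prop} {P : (Omega -> Prop) -> R}.
Context {X : nat -> Omega -> nat} {p0 : nat -> R}.
Variable s : nat.
Hypothesis HP : is_prob_space F P.
Hypothesis HX : iid_with_pmf F P X p0.
Hypothesis p0_vanishes : forall x, (s < x)%nat -> p0 x = 0.

Let HF : sigma_algebra F := proj1 HP.

Lemma measurable_depends_on n Q : depends_on n Q -> F (fun w => Q (fun i => X i w)).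
Proof.
  revert Q. induction n as [|n IH]; intros Q HQ.
  - destruct (classic (Q (fun _ => O))) as [H|H].
    + replace (fun w => Q (fun i => X i w)) with (fun _ : Omega => True);
        [apply measurable_True, HF|].
      apply event_ext. intro w. rewrite (depends_on_0 Q _ HQ). tauto.
    + replace (fun w => Q (fun i => X i w)) with (fun _ : Omega => False);
        [apply measurable_False, HF|].
      apply event_ext. intro w. rewrite (depends_on_0 Q _ HQ). tauto.
  - replace (fun w => Q (fun i => X i w))
      with (fun w => exists x, X n w = x /\ Q (upd (fun i => X i w) n x)).
    + apply (measurable_ex HF). intro x. apply (measurable_and HF); [apply (proj1 HX)|].
      apply (IH (fun c => Q (upd c n x))), depends_on_upd, HQ.
    + apply event_ext. intro w. rewrite <- (depends_on_upd_same n Q (fun i => X i w) HQ). split.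
      * intros [x [<- H]]. exact H.
      * intros H. exists (X n w). auto.
Qed.

Lemma P_cylinder_0 Q m d : depends_on 0 Q ->
  P (fun w => Q (fun i => X i w) /\ forall i, (0 <= i < m)%nat -> X i w = d i) =
  prod_expect p0 s 0 (fun c => indicator (Q c)) * tail_weight p0 0 m d.
Proof.
  intros HQ. unfold prod_expect, weight, tail_weight. simpl.
  replace (prodR (fun i => if (i <? 0)%nat then 1 else p0 (d i)) m)
    with (prodR (fun i => p0 (d i)) m) by (apply prodR_ext; reflexivity).
  destruct (classic (Q (fun _ => O))) as [H|H].
  - rewrite indicator_true, <- (proj2 HX) by exact H. rewrite !Rmult_1_l. f_equal.
    apply event_ext. intro w. rewrite (depends_on_0 Q _ HQ). split.
    + intros [_ Hw] i Hi. apply Hw. lia.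
    + intros Hw. split; [exact H|intros; apply Hw; lia].
  - rewrite indicator_false by exact H.
    replace (fun w => Q (fun i => X i w) /\ _) with (fun _ : Omega => False);
      [rewrite (P_False HP); ring|].
    apply event_ext. intro w. rewrite (depends_on_0 Q _ HQ). tauto.
Qed.

Lemma P_cylinder n Q m d : depends_on n Q -> (n <= m)%nat ->
  P (fun w => Q (fun i => X i w) /\ forall i, (n <= i < m)%nat -> X i w = d i) =
  prod_expect p0 s n (fun c => indicator (Q c)) * tail_weight p0 n m d.
Proof.
  revert Q d. induction n as [|n IH]; intros Q d HQ Hnm; [apply P_cylinder_0, HQ|].
  (* split on the value [x] of [X n]: each piece is a cylinder over the first [n] coordinates *)
  set (A := fun x w => Q (upd (fun i => X i w) n x) /\
                       forall i, (n <= i < m)%nat -> X i w = upd d n x i).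
  assert (HA : forall x, F (A x)).
  { intro x. apply (measurable_depends_on m (fun c => Q (upd c n x) /\
             forall i, (n <= i < m)%nat -> c i = upd d n x i)).
    intros c c' Hc. rewrite (depends_on_upd n Q x HQ c c') by (intros; apply Hc; lia).
    split; intros [H1 H2]; split; auto; intros i Hi; [rewrite <- Hc|rewrite Hc]; auto; lia. }
  assert (HAd : forall x y w, x <> y -> A x w -> A y w -> False).
  { intros x y w Hxy [_ Hx] [_ Hy]. apply Hxy.
    specialize (Hx n ltac:(lia)). specialize (Hy n ltac:(lia)). rewrite upd_eq in Hx, Hy. congruence. }
  assert (HPA : forall x, P (A x) =
            prod_expect p0 s n (fun c => indicator (Q (upd c n x))) * (p0 x * tail_weight p0 (S n) m d)).
  { intro x. rewrite <- tail_weight_upd by lia.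
    apply (IH (fun c => Q (upd c n x))); [apply depends_on_upd, HQ|lia]. }
  pose proof (P_ex_disjoint HP A HA HAd) as Hsum.
  replace (fun w => exists x, A x w) with
    (fun w => Q (fun i => X i w) /\ forall i, (S n <= i < m)%nat -> X i w = d i) in Hsum
    by (apply event_ext; intro w; apply cylinder_split; auto; lia).
  rewrite (uniqueness_sum _ _ _ Hsum (infinite_sum_finite _ s
    ltac:(intros x Hx; rewrite HPA, p0_vanishes by exact Hx; ring))).
  rewrite prod_expect_S, (prod_expect_sum_f_R0 p0 s n (fun x c => p0 x * indicator (Q (upd c n x)))).
  rewrite Rmult_comm, scal_sum. apply sum_eq. intros x _. rewrite HPA, prod_expect_scal. ring.
Qed.

Lemma P_depends_on n Q : depends_on n Q ->
  P (fun w => Q (fun i => X i w)) = prod_expect p0 s n (fun c => indicator (Q c)).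
Proof.
  intros HQ.
  rewrite <- (Rmult_1_r (prod_expect _ _ _ _)), <- (tail_weight_empty p0 n n (fun _ => O)) by lia.
  rewrite <- P_cylinder by (auto; lia). f_equal.
  apply event_ext. intro w. split; [intros H; split; [exact H|intros; lia]|tauto].
Qed.

End IidSample.

(** * Empirical frequencies *)

Fixpoint count (c : nat -> nat) (n j : nat) : nat :=
  match n with
  | O => O
  | S m => (count c m j + (if Nat.eqb (c m) j then 1 else 0))%nat
  end.

Lemma count_obs_eq {Omega : Type} (X : nat -> Omega -> nat) w n j :
  count_obs X w n j = count (fun i => X i w) n j.
Proof. induction n as [|n IH]; simpl; [reflexivity|]. rewrite IH. reflexivity. Qed.

Lemma count_ext c c' n j : (forall i, (i < n)%nat -> c i = c' i) -> count c n j = count c' n j.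
Proof.
  induction n as [|n IH]; intros H; simpl; [reflexivity|].
  rewrite IH by (intros; apply H; lia). rewrite H by lia. reflexivity.
Qed.

Lemma count_out_of_range c n s i : (forall k, (c k <= s)%nat) -> (s < i)%nat -> count c n i = O.
Proof.
  intros Hc Hi. induction n as [|n IH]; simpl; [reflexivity|]. rewrite IH.
  destruct (Nat.eqb_spec (c n) i) as [E|E]; [specialize (Hc n); lia|reflexivity].
Qed.

Definition centered_count (c : nat -> nat) (n j : nat) (p : R) : R := INR (count c n j) - INR n * p.

Definition increment (j : nat) (p : R) (x : nat) : R := (if Nat.eqb x j then 1 else 0) - p.

Lemma centered_count_upd c n x j p :
  centered_count (upd c n x) (S n) j p = centered_count c n j p + increment j p x.
Proof.
  unfold centered_count, increment. simpl count. rewrite upd_eq.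
  rewrite (count_ext (upd c n x) c n j) by (intros; apply upd_neq; lia).
  rewrite plus_INR, S_INR. destruct (Nat.eqb x j); simpl; ring.
Qed.

Lemma sum_f_R0_indicator_nat (f : nat -> R) j N : (j <= N)%nat ->
  sum_f_R0 (fun x => f x * (if Nat.eqb x j then 1 else 0)) N = f j.
Proof.
  intros HjN. rewrite (sum_f_R0_tail_zero _ j N);
    [| intros i Hi; destruct (Nat.eqb_spec i j); [lia|ring] | exact HjN].
  destruct j as [|j].
  - simpl. ring.
  - rewrite tech5, Nat.eqb_refl, (sum_eq _ (fun _ => 0)), sum_cte by
      (intros i Hi; destruct (Nat.eqb_spec i (S j)); [lia|ring]). ring.
Qed.

Section CenteredCountMoments.

Variables (p0 : nat -> R) (s j : nat).
Hypothesis p0_nonneg : forall k, 0 <= p0 k.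
Hypothesis p0_sum : sum_f_R0 p0 s = 1.
Hypothesis j_le_s : (j <= s)%nat.

Let Z := increment j (p0 j).
Let moment (k : nat) : R := sum_f_R0 (fun x => p0 x * Z x ^ k) s.
Let D (c : nat -> nat) (n : nat) : R := centered_count c n j (p0 j).

Lemma increment_mean : moment 1 = 0.
Proof.
  unfold moment, Z, increment.
  rewrite (sum_eq _ (fun x => p0 x * (if Nat.eqb x j then 1 else 0) - p0 x * p0 j)) by (intros; ring).
  rewrite minus_sum, sum_f_R0_indicator_nat, <- scal_sum, p0_sum by exact j_le_s. ring.
Qed.

Lemma increment_abs_le_1 x : -1 <= Z x <= 1.
Proof.
  assert (Hp : p0 j <= 1) by (rewrite <- p0_sum; exact (term_le_sum_f_R0 p0 j s p0_nonneg j_le_s)).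
  pose proof (p0_nonneg j). unfold Z, increment. destruct (Nat.eqb x j); lra.
Qed.

Lemma increment_moment_le_1 k : (forall x, 0 <= Z x ^ k <= 1) -> 0 <= moment k <= 1.
Proof.
  intros HZ. split.
  - apply cond_pos_sum. intro x. pose proof (HZ x). pose proof (p0_nonneg x). nra.
  - rewrite <- p0_sum. apply sum_Rle. intros x _. pose proof (HZ x). pose proof (p0_nonneg x). nra.
Qed.

Lemma increment_moment2 : 0 <= moment 2 <= 1.
Proof.
  apply increment_moment_le_1. intro x. pose proof (increment_abs_le_1 x). split; [apply pow2_ge_0|nra].
Qed.

Lemma increment_moment4 : moment 4 <= 1.
Proof.
  apply increment_moment_le_1. intro x. pose proof (increment_abs_le_1 x).
  replace (Z x ^ 4) with ((Z x ^ 2) ^ 2) by ring.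
  assert (Z x ^ 2 <= 1) by nra. pose proof (pow2_ge_0 (Z x)). split; [apply pow2_ge_0|nra].
Qed.

Lemma prod_expect_centered_count_S n (f : R -> R) :
  prod_expect p0 s (S n) (fun c => f (D c (S n))) =
  prod_expect p0 s n (fun c => sum_f_R0 (fun x => p0 x * f (D c n + Z x)) s).
Proof.
  rewrite prod_expect_S. apply prod_expect_ext. intro c.
  apply sum_eq. intros x _. unfold D. rewrite centered_count_upd. reflexivity.
Qed.

Lemma sum_p0_shift y : sum_f_R0 (fun x => p0 x * (y + Z x)) s = y.
Proof.
  transitivity (y * sum_f_R0 p0 s + moment 1); [|rewrite p0_sum, increment_mean; ring].
  unfold moment. rewrite scal_sum, <- sum_plus. apply sum_eq. intros. ring.
Qed.

Lemma sum_p0_shift_pow2 y : sum_f_R0 (fun x => p0 x * (y + Z x) ^ 2) s = y ^ 2 + moment 2.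
Proof.
  transitivity (y ^ 2 * sum_f_R0 p0 s + 2 * y * moment 1 + moment 2);
    [|rewrite p0_sum, increment_mean; ring].
  unfold moment. rewrite !scal_sum, <- !sum_plus. apply sum_eq. intros. ring.
Qed.

Lemma sum_p0_shift_pow4 y : sum_f_R0 (fun x => p0 x * (y + Z x) ^ 4) s =
  y ^ 4 + 6 * moment 2 * y ^ 2 + 4 * moment 3 * y + moment 4.
Proof.
  transitivity (y ^ 4 * sum_f_R0 p0 s + 4 * y ^ 3 * moment 1 + 6 * y ^ 2 * moment 2
                + 4 * y * moment 3 + moment 4);
    [|rewrite p0_sum, increment_mean; ring].
  unfold moment. rewrite !scal_sum, <- !sum_plus. apply sum_eq. intros. ring.
Qed.

Lemma centered_count_mean n : prod_expect p0 s n (fun c => D c n) = 0.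
Proof.
  induction n as [|n IH]; [unfold prod_expect, D, centered_count; simpl; ring|].
  rewrite (prod_expect_centered_count_S n (fun y => y)), <- IH.
  apply prod_expect_ext. intro c. apply sum_p0_shift.
Qed.

Lemma centered_count_second_moment n : prod_expect p0 s n (fun c => D c n ^ 2) <= INR n.
Proof.
  induction n as [|n IH]; [unfold prod_expect, D, centered_count; simpl; lra|].
  rewrite (prod_expect_centered_count_S n (fun y => y ^ 2)).
  rewrite (prod_expect_ext _ _ _ _ (fun c => D c n ^ 2 + moment 2 * 1))
    by (intro c; rewrite sum_p0_shift_pow2; ring).
  rewrite prod_expect_plus, prod_expect_scal, prod_expect_1 by exact p0_sum.
  pose proof increment_moment2. rewrite S_INR. lra.
Qed.

Lemma centered_count_fourth_moment n : prod_expect p0 s n (fun c => D c n ^ 4) <= 3 * INR n ^ 2.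
Proof.
  induction n as [|n IH]; [unfold prod_expect, D, centered_count; simpl; lra|].
  rewrite (prod_expect_centered_count_S n (fun y => y ^ 4)).
  rewrite (prod_expect_ext _ _ _ _ (fun c => D c n ^ 4 + (6 * moment 2 * D c n ^ 2
             + (4 * moment 3 * D c n + moment 4 * 1))))
    by (intro c; rewrite sum_p0_shift_pow4; ring).
  rewrite !prod_expect_plus, !prod_expect_scal, prod_expect_1, centered_count_mean by exact p0_sum.
  pose proof (centered_count_second_moment n).
  pose proof increment_moment2. pose proof increment_moment4.
  pose proof (pos_INR n). rewrite S_INR. nra.
Qed.

End CenteredCountMoments.

Definition large_deviation (p0 : nat -> R) (s : nat) (eta : R) (n : nat) (c : nat -> nat) : Prop :=
  exists j, (j <= s)%nat /\ INR n * eta <= Rabs (centered_count c n j (p0 j)).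

Lemma large_deviation_depends_on p0 s eta n : depends_on n (large_deviation p0 s eta n).
Proof.
  intros c c' H. unfold large_deviation, centered_count.
  split; intros [j [Hj Hb]]; exists j; split; auto;
    [rewrite <- (count_ext c c' n j H)|rewrite (count_ext c c' n j H)]; exact Hb.
Qed.

Lemma indicator_large_deviation_le p0 s eta n c : 0 < INR n * eta ->
  indicator (large_deviation p0 s eta n c) <=
  sum_f_R0 (fun j => / (INR n * eta) ^ 4 * centered_count c n j (p0 j) ^ 4) s.
Proof.
  intros Hpos. set (K := INR n * eta) in *.
  assert (HK : 0 < / K ^ 4) by (apply Rinv_0_lt_compat, pow_lt, Hpos).
  assert (Hterm : forall j, 0 <= / K ^ 4 * centered_count c n j (p0 j) ^ 4).
  { intro j. apply Rmult_le_pos; [lra|].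
    replace (centered_count c n j (p0 j) ^ 4) with ((centered_count c n j (p0 j) ^ 2) ^ 2) by ring.
    apply pow2_ge_0. }
  destruct (classic (large_deviation p0 s eta n c)) as [[j [Hj Hb]]|HB].
  - rewrite indicator_true by (exists j; auto).
    eapply Rle_trans; [|exact (term_le_sum_f_R0 _ j s Hterm Hj)].
    set (D := centered_count c n j (p0 j)).
    assert (HD : K ^ 4 <= D ^ 4).
    { replace (D ^ 4) with ((Rabs D ^ 2) ^ 2) by (rewrite pow2_abs; ring).
      replace ((Rabs D ^ 2) ^ 2) with (Rabs D ^ 4) by ring.
      apply pow_incr. unfold K, D in *. split; lra. }
    apply Rmult_le_reg_l with (K ^ 4); [apply pow_lt, Hpos|].
    rewrite <- Rmult_assoc, Rinv_r by (apply pow_nonzero; lra). lra.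
  - rewrite indicator_false by exact HB. apply cond_pos_sum, Hterm.
Qed.

Lemma prod_expect_large_deviation_le p0 s eta n :
  (forall k, 0 <= p0 k) -> sum_f_R0 p0 s = 1 -> 0 < eta -> (1 <= n)%nat ->
  prod_expect p0 s n (fun c => indicator (large_deviation p0 s eta n c)) <=
  3 * INR (S s) / eta ^ 4 / INR n ^ 2.
Proof.
  intros Hp Hsum Heta Hn.
  assert (Hn1 : 1 <= INR n) by (apply (le_INR 1); lia).
  assert (Hpos : 0 < INR n * eta) by nra.
  eapply Rle_trans;
    [apply prod_expect_le; [exact Hp|]; intro c; apply indicator_large_deviation_le, Hpos|].
  rewrite (prod_expect_sum_f_R0 p0 s n
             (fun j c => / (INR n * eta) ^ 4 * centered_count c n j (p0 j) ^ 4)).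
  eapply Rle_trans.
  { apply (sum_Rle _ (fun _ => / (INR n * eta) ^ 4 * (3 * INR n ^ 2))). intros j Hj.
    rewrite prod_expect_scal. apply Rmult_le_compat_l; [left; apply Rinv_0_lt_compat, pow_lt, Hpos|].
    apply centered_count_fourth_moment; assumption. }
  rewrite sum_cte. right. field. lra.
Qed.

Lemma inv_sq_le_telescope (a : R) : 1 <= a -> / (a + 1) ^ 2 <= / a - / (a + 1).
Proof.
  intros Ha. replace (/ a - / (a + 1)) with (/ (a * (a + 1))) by (field; lra).
  apply Rinv_le_contravar; [nra|]. simpl. nra.
Qed.

Lemma sum_inv_sq_tail N M : (1 <= N)%nat ->
  sum_f_R0 (fun k => / (INR (N + k) + 1) ^ 2) M <= / INR N - / (INR (N + M) + 1).
Proof.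
  intros HN. induction M as [|M IH].
  - simpl. rewrite Nat.add_0_r. apply inv_sq_le_telescope, (le_INR 1), HN.
  - rewrite tech5. replace (INR (N + S M)) with (INR (N + M) + 1) by (rewrite <- S_INR; f_equal; lia).
    pose proof (inv_sq_le_telescope (INR (N + M) + 1) ltac:(pose proof (pos_INR (N + M)); lra)).
    lra.
Qed.

Lemma inv_sq_tail_small (c eps : R) : 0 <= c -> 0 < eps ->
  exists N, (1 <= N)%nat /\ forall M, sum_f_R0 (fun k => c / INR (N + k) ^ 2) M <= eps.
Proof.
  intros Hc Heps. destruct (INR_archimed eps (c + 1)) as [N HN]; [lra|].
  exists (S (S N)). split; [lia|]. intro M.
  rewrite (sum_eq _ (fun k => / (INR (S N + k) + 1) ^ 2 * c))
    by (intros k _; replace (S (S N) + k)%nat with (S (S N + k)) by lia;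
        rewrite S_INR; unfold Rdiv; ring).
  rewrite <- scal_sum.
  pose proof (sum_inv_sq_tail (S N) M ltac:(lia)).
  assert (0 < / (INR (S N + M) + 1)) by (apply Rinv_0_lt_compat; pose proof (pos_INR (S N + M)); lra).
  assert (HSN : 0 < INR (S N)) by (apply lt_0_INR; lia).
  assert (c * / INR (S N) <= eps).
  { apply Rmult_le_reg_r with (INR (S N)); [exact HSN|].
    rewrite Rmult_assoc, Rinv_l by lra. rewrite S_INR. pose proof (pos_INR N). nra. }
  nra.
Qed.

Section EmpiricalConvergence.

Context {Omega : Type} {F : (Omega -> Prop) -> Prop} {P : (Omega -> Prop) -> R}.
Context {X : nat -> Omega -> nat} {p0 : nat -> R}.
Variable s : nat.
Hypothesis HP : is_prob_space F P.
Hypothesis HX : iid_with_pmf F P X p0.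
Hypothesis p0_nonneg : forall k, 0 <= p0 k.
Hypothesis p0_vanishes : forall x, (s < x)%nat -> p0 x = 0.
Hypothesis p0_sum : sum_f_R0 p0 s = 1.

Let HF : sigma_algebra F := proj1 HP.

Lemma values_bounded_almost_surely :
  F (fun w => forall i, (X i w <= s)%nat) /\ P (fun w => forall i, (X i w <= s)%nat) = 1.
Proof.
  assert (Hdep : forall i, depends_on (S i) (fun c => ~ (c i <= s)%nat)).
  { intros i c c' Hc. rewrite (Hc i) by lia. tauto. }
  assert (Hout : forall i, F (fun w => ~ (X i w <= s)%nat))
    by (intro i; apply (measurable_depends_on HP HX (S i) _ (Hdep i))).
  assert (HU : F (fun w => exists i, ~ (X i w <= s)%nat)) by (apply (measurable_ex HF), Hout).
  assert (Hnull : P (fun w => exists i, ~ (X i w <= s)%nat) <= 0).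
  { apply (P_ex_le HP); [exact Hout|]. intro M.
    rewrite (sum_eq _ (fun _ => 0)); [rewrite sum_cte; lra|]. intros i _.
    rewrite (P_depends_on s HP HX p0_vanishes (S i) _ (Hdep i)).
    unfold prod_expect.
    rewrite (config_sum_ext _ _ _ (fun _ => 0 * 0)); [rewrite config_sum_scal; ring|].
    intro c. unfold weight. simpl prodR.
    destruct (classic (c i <= s)%nat) as [Hle|Hgt].
    - rewrite indicator_false by tauto. ring.
    - rewrite p0_vanishes by lia. ring. }
  replace (fun w => forall i, (X i w <= s)%nat) with (fun w => ~ exists i, ~ (X i w <= s)%nat).
  - split; [apply (measurable_not HF), HU|].
    rewrite (P_not HP _ HU). pose proof (P_nonneg HP _ HU). lra.
  - apply event_ext. intro w. split.
    + intros Hn i. apply NNPP. intro Hi. apply Hn. exists i. exact Hi.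
    + intros Hn [i Hi]. apply Hi, Hn.
Qed.

Lemma no_large_deviation_eventually eta : 0 < eta ->
  F (eventually_not (fun n w => large_deviation p0 s eta n (fun i => X i w))) /\
  P (eventually_not (fun n w => large_deviation p0 s eta n (fun i => X i w))) = 1.
Proof.
  intros Heta.
  apply (borel_cantelli HP (fun n w => large_deviation p0 s eta n (fun i => X i w))).
  - intro n. apply (measurable_depends_on HP HX n), large_deviation_depends_on.
  - intros eps Heps.
    destruct (inv_sq_tail_small (3 * INR (S s) / eta ^ 4) eps) as [N [HN Htail]]; [|exact Heps|].
    { unfold Rdiv. apply Rmult_le_pos; [pose proof (pos_INR (S s)); lra|].
      left. apply Rinv_0_lt_compat, pow_lt, Heta. }
    exists N. intro M. eapply Rle_trans; [|exact (Htail M)]. apply sum_Rle. intros k _.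
    rewrite (P_depends_on s HP HX p0_vanishes _ _ (large_deviation_depends_on _ _ _ _)).
    apply prod_expect_large_deviation_le; auto; lia.
Qed.

Theorem empirical_eventually_close eta : 0 < eta ->
  exists E, F E /\ P E = 1 /\ forall w, E w ->
    exists n0, forall n, (n0 <= n)%nat ->
      (forall i, (s < i)%nat -> empirical X w n i = 0) /\
      (forall i, (i <= s)%nat -> Rabs (empirical X w n i - p0 i) < eta).
Proof.
  intros Heta.
  destruct values_bounded_almost_surely as [Hbm Hb1].
  destruct (no_large_deviation_eventually eta Heta) as [Hgm Hg1].
  exists (fun w => (forall i, (X i w <= s)%nat) /\
    eventually_not (fun n w => large_deviation p0 s eta n (fun i => X i w)) w).
  split; [apply (measurable_and HF); assumption|]. split; [apply (P_and_almost_sure HP); assumption|].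
  intros w [Hbounded [N HN]]. exists (max N 1). intros n Hn.
  assert (Hn1 : 1 <= INR n) by (apply (le_INR 1); lia).
  split.
  - intros i Hi. unfold empirical. rewrite count_obs_eq, (count_out_of_range _ n s i Hbounded Hi).
    simpl. unfold Rdiv. ring.
  - intros i Hi.
    assert (Hdev : Rabs (centered_count (fun k => X k w) n i (p0 i)) < INR n * eta).
    { apply Rnot_le_lt. intro H. apply (HN n ltac:(lia)). exists i. auto. }
    unfold empirical. rewrite count_obs_eq.
    replace (INR (count (fun k => X k w) n i) / INR n - p0 i)
      with (centered_count (fun k => X k w) n i (p0 i) / INR n) by (unfold centered_count; field; lra).
    unfold Rdiv. rewrite Rabs_mult, (Rabs_right (/ INR n)) by (left; apply Rinv_0_lt_compat; lra).
    apply Rmult_lt_reg_r with (INR n); [lra|]. rewrite Rmult_assoc, Rinv_l by lra. lra.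
Qed.

End EmpiricalConvergence.

Theorem proposition4
  (p0 : nat -> R) (S : nat)
  (Hpmf : is_pmf p0) (Hconv : convex_seq p0)
  (HS : (1 <= S)%nat)
  (Hsupp : forall k, p0 k <> 0 <-> (k <= S)%nat)
  (Omega : Type) (F : (Omega -> Prop) -> Prop) (P : (Omega -> Prop) -> R)
  (HP : is_prob_space F P)
  (X : nat -> Omega -> nat) (HX : iid_with_pmf F P X p0) :
  exists E : Omega -> Prop,
    F E /\ P E = 1 /\
    forall w, E w ->
      exists n0 : nat, forall n : nat, (n0 <= n)%nat ->
        (exists p, is_LSE (empirical X w n) p) /\
        forall p, is_LSE (empirical X w n) p ->
          (forall k, support p k <-> (k <= S)%nat) \/
          (forall k, support p k <-> (k <= S + 1)%nat).
Proof.
  destruct Hpmf as [Hnn Hsum].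
  pose proof (p0_vanishes p0 S Hsupp) as Hz.
  assert (H1 : sum_f_R0 p0 S = 1) by exact (uniqueness_sum p0 _ _ (infinite_sum_finite p0 S Hz) Hsum).
  destruct (LSE_support_near_p0 p0 S Hnn Hconv Hsupp) as [eta [Heta Hnear]].
  destruct (empirical_eventually_close S HP HX Hnn Hz H1 eta Heta) as [E [HE [HPE HEw]]].
  exists E. split; [exact HE|]. split; [exact HPE|].
  intros w Hw. destruct (HEw w Hw) as [n0 Hn0]. exists n0. intros n Hn.
  destruct (Hn0 n Hn) as [Hout Hclose]. exact (Hnear _ Hout Hclose).
Qed.
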